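(* For every $n\ge1$, the maps $\varphi\colon\mathscr C_n(A)\to\mathscr G_n^{\mathrm{ext}}(A)$ are well defined (i.e. $\varphi(c)$ has no directed cycle of uniform weight) and form a lax morphism of operads: for $c\in\mathscr C_n(A)$, $d\in\mathscr C_n(B)$ and $a\in A$ one has $\varphi(c\circ_a d)\le\varphi(c)\circ_a\varphi(d)$ in $\mathscr G_n^{\mathrm{ext}}(A[B/a])$, and $\varphi$ commutes with relabelling along bijections.
   Context: $\mathscr C_n(A)$ (little $n$-cubes) is the space of families $c=(c_a)_{a\in A}$ of maps $c_a\colon(0,1)^n\to(0,1)^n$, $c_a(x)=u(a)\odot x+v(a)$ with $u(a)\in\mathbb R_{>0}^n$ ($\odot$ = coordinatewise product), whose images are pairwise disjoint; symmetric groups permute the indices and $c\circ_a d$ is obtained by composing the embeddings $d_b$ with $c_a$, i.e. $(c\circ_a d)_{a'}=c_{a'}$ for $a'\neq a$ and $(c\circ_a d)_b=c_a\circ d_b$. Put $w(a)=u(a)+v(a)$. Say $c_a$ is $i$-below $c_b$ if $w(a)_i\le v(b)_i$, and $c_a,c_b$ are $i$-separated if one is $i$-below the other. $\varphi(c)$ is the complete directed graph on $A$ in which the edge between $a\neq b$ has weight the smallest $i$ such that $c_a,c_b$ are $i$-separated, directed $a\to b$ iff $c_a$ is $i$-below $c_b$. Weighted complete directed graphs on $A$: each two-element subset $\{a,b\}$ carries exactly one directed edge with weight in $\{1,\dots,n\}$; order $g\le h$ iff whenever $a\xrightarrow{v}b$ in $g$, either $a\xrightarrow{w}b$ in $h$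 with $v\le w$ or $b\xrightarrow{w}a$ in $h$ with $v<w$. $\mathscr G_n^{\mathrm{ext}}(A)$ is the poset of such graphs with no directed cycle of uniform weight, with composition $g\circ_a h$ on $(A\setminus\{a\})\sqcup B$: edges among $A\setminus\{a\}$ as in $g$, among $B$ as in $h$, and between $a'\in A\setminus\{a\}$ and $b\in B$ as the edge between $a'$ and $a$ in $g$. *)

From HB Require Import structures.
From mathcomp Require Import all_boot all_order all_algebra.
From mathcomp Require Import reals.
Set Implicit Arguments. Unset Strict Implicit. Unset Printing Implicit Defensive.
Import Order.TTheory GRing.Theory Num.Theory.

Local Open Scope ring_scope.

(* A family c = (c_a)_{a in A} with c_a(x) = u(a) (.) x + v(a),
   coordinates indexed by 'I_n (coordinate i+1 of the paper is i : 'I_n). *)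
Record cube_fam (R : realType) (n : nat) (A : Type) := CubeFam {
  cu : A -> 'I_n -> R ;
  cv : A -> 'I_n -> R }.

Definition in_unit_cube (R : realType) (n : nat) (x : 'I_n -> R) : Prop :=
  forall i, 0 < x i /\ x i < 1.

Definition cemb (R : realType) (n : nat) (A : Type) (c : cube_fam R n A) (a : A)
  (x : 'I_n -> R) : 'I_n -> R := fun i => cu c a i * x i + cv c a i.

Definition is_cubes (R : realType) (n : nat) (A : Type) (c : cube_fam R n A) : Prop :=
  [/\ (forall a i, 0 < cu c a i),
      (forall a x, in_unit_cube x -> in_unit_cube (cemb c a x)) &
      (forall a b, a <> b -> forall x y, in_unit_cube x -> in_unit_cube y ->
          cemb c a x <> cemb c b y)].

Definition cw (R : realType) (n : nat) (A : Type) (c : cube_fam R n A) a i :=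
  cu c a i + cv c a i.
Definition below (R : realType) (n : nat) (A : Type) (c : cube_fam R n A)
  (a b : A) (i : 'I_n) : bool := cw c a i <= cv c b i.
Definition separated (R : realType) (n : nat) (A : Type) (c : cube_fam R n A)
  (a b : A) (i : 'I_n) : bool := below c a b i || below c b a i.

Definition cube_relabel (R : realType) (n : nat) (A A' : Type)
  (c : cube_fam R n A) (sigma : A' -> A) : cube_fam R n A' :=
  CubeFam (fun a' => cu c (sigma a')) (fun a' => cv c (sigma a')).

Notation subst_idx A B a := ({x : A | x != a} + B)%type.

Definition cube_comp (R : realType) (n : nat) (A B : finType) (c : cube_fam R n A)
  (a : A) (d : cube_fam R n B) : cube_fam R n (subst_idx A B a) :=
  CubeFam
    (fun z => match z with
              | inl x => cu c (val x)
              | inr b => fun i => cu c a i * cu d b i end)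
    (fun z => match z with
              | inl x => cv c (val x)
              | inr b => fun i => cu c a i * cv d b i + cv c a i end).

Local Close Scope ring_scope.

(* g a b = w > 0 means there is a directed edge a -> b of weight w;
   g a b = 0 means there is no edge a -> b. *)
Definition wgraph (A : Type) := A -> A -> nat.

Definition is_wcdg (n : nat) (A : finType) (g : wgraph A) : Prop :=
  (forall a, g a a = 0%N) /\
  (forall a b, a != b ->
     ((0 < g a b)%N (+) (0 < g b a))%B /\ (g a b <= n)%N /\ (g b a <= n)%N).

Definition uniform_cycle (A : finType) (g : wgraph A) (w : nat) (s : seq A) : bool :=
  [&& (0 < w)%N, s != [::], uniq s & cycle (fun x y => g x y == w) s].

Definition is_Gext (n : nat) (A : finType) (g : wgraph A) : Prop :=
  is_wcdg n g /\ ~ (exists w s, uniform_cycle g w s).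

Definition graph_le (A : finType) (g h : wgraph A) : Prop :=
  forall a b, (0 < g a b)%N ->
    ((0 < h a b) && (g a b <= h a b))%N || ((0 < h b a) && (g a b < h b a))%N.

Definition graph_relabel (A A' : Type) (g : wgraph A) (sigma : A' -> A) : wgraph A' :=
  fun x y => g (sigma x) (sigma y).

Definition graph_comp (A B : finType) (g : wgraph A) (a : A) (h : wgraph B)
  : wgraph (subst_idx A B a) :=
  fun z1 z2 => match z1, z2 with
               | inl x, inl y => g (val x) (val y)
               | inr b, inr b' => h b b'
               | inl x, inr _ => g (val x) a
               | inr _, inl y => g a (val y)
               end.

(* weight = (smallest i such that c_a, c_b are i-separated) + 1 (paper's
   1-based coordinate), directed a -> b iff c_a is i-below c_b *)
Definition phi (R : realType) (n : nat) (A : finType) (c : cube_fam R n A) : wgraph A :=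
  fun a b =>
    if a == b then 0%N else
    match [pick i : 'I_n | separated c a b i &&
                           [forall j : 'I_n, (j < i)%N ==> ~~ separated c a b j]] with
    | Some i => if below c a b i then i.+1 else 0%N
    | None => 0%N
    end.

Arguments cube_comp {R n A B} c a d.
Arguments graph_comp {A B} g a h.

From HB Require Import structures.
From mathcomp Require Import all_boot all_order all_algebra.
From mathcomp Require Import reals.
From mathcomp Require Import ring lra.
From Stdlib Require Import FunctionalExtensionality.
Set Implicit Arguments. Unset Strict Implicit. Unset Printing Implicit Defensive.
Import Order.TTheory GRing.Theory Num.Theory.

(* The cube c_a is the open box prod_i (v(a)_i, w(a)_i), and i-belowness of two
   boxes is antisymmetric since u > 0. Two disjoint boxes are separated in some
   coordinate (otherwise the midpoints of the overlapping intervals give a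
   common point), so phi(c) is complete; along an edge of weight i+1 the
   coordinate v_i strictly increases, so there is no cycle of uniform weight.
   In c o_a d the box of c_a o d_b lies inside that of c_a and c_a is monotone,
   so every separation in c or d persists in c o_a d with the same direction:
   the first separating coordinate of a pair can only decrease, which is the
   lax inequality. *)

Lemma cycle_irr_trans (T : Type) (e : rel T) (x : T) (s : seq T) :
  irreflexive e -> transitive e -> ~~ cycle e (x :: s).
Proof.
by move=> e_irr e_tr; rewrite (cycle_all2rel e_tr) /= allrel_cons2 e_irr.
Qed.

Section Phi.
Variables (R : realType) (n : nat).
Local Open Scope ring_scope.

Section Family.
Variables (A : Type) (c : cube_fam R n A).

Lemma separatedC a b i : separated c a b i = separated c b a i.
Proof. by rewrite /separated orbC. Qed.

Lemma below_separated a b i : below c a b i -> separated c a b i.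
Proof. by rewrite /separated => ->. Qed.

Lemma below_lt_cv a b i : 0 < cu c a i -> below c a b i -> cv c a i < cv c b i.
Proof. by rewrite /below /cw => ? ?; lra. Qed.

Lemma below_asym a b i :
  0 < cu c a i -> 0 < cu c b i -> below c a b i -> ~~ below c b a i.
Proof. by move=> ua ub /(below_lt_cv ua) ab; apply/negP => /(below_lt_cv ub); lra. Qed.

Definition overlap_mid a b i :=
  (Num.max (cv c a i) (cv c b i) + Num.min (cw c a i) (cw c b i)) / 2.

Lemma overlap_midP a b i : 0 < cu c a i -> 0 < cu c b i -> ~~ separated c a b i ->
  cv c a i < overlap_mid a b i < cw c a i /\
  cv c b i < overlap_mid a b i < cw c b i.
Proof.
rewrite /separated /below negb_or -!ltNge /cw => ua ub /andP[ba ab].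
have lt_mid : Num.max (cv c a i) (cv c b i) < Num.min (cw c a i) (cw c b i).
  by rewrite lt_min !gt_max /cw; apply/andP; split; apply/andP; split; lra.
have [] := midf_lt lt_mid.
by rewrite /overlap_mid gt_max lt_min => /andP[-> ->] /andP[-> ->].
Qed.

Lemma cemb_onto_box a (p : 'I_n -> R) : (forall i, 0 < cu c a i) ->
  (forall i, cv c a i < p i < cw c a i) ->
  exists2 x, in_unit_cube x & cemb c a x = p.
Proof.
move=> ua p_in; exists (fun i => (p i - cv c a i) / cu c a i).
  move=> i; have := ua i; have /andP := p_in i; rewrite /cw => -[] ? ? ?.
  by rewrite ltr_pdivlMr // ltr_pdivrMr //; split; lra.
apply: functional_extensionality => i; rewrite /cemb mulrC divfK ?subrK //.
exact: lt0r_neq0.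
Qed.

End Family.

Lemma affine_unit_interval (u v : R) : 0 < u ->
  (forall t, 0 < t < 1 -> 0 < u * t + v < 1) -> 0 <= v /\ u + v <= 1.
Proof.
move=> u_gt0 maps01; split; rewrite leNgt; apply/negP => out.
- have t01 : 0 < - v / (u - v) < 1 by rewrite ltr_pdivlMr ?ltr_pdivrMr; lra.
  have /andP[+ _] := maps01 _ t01.
  have -> : u * (- v / (u - v)) + v = - v ^+ 2 / (u - v) by field; lra.
  by rewrite ltr_pdivlMr; nra.
- pose s := u + v - 1.
  have t01 : 0 < u / (u + s) < 1 by rewrite /s ltr_pdivlMr ?ltr_pdivrMr; lra.
  have /andP[_] := maps01 _ t01.
  have -> : u * (u / (u + s)) + v = 1 + s ^+ 2 / (u + s) by rewrite /s; field; lra.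
  by rewrite -ltrBrDl subrr ltr_pdivrMr /s; nra.
Qed.

Section Graph.
Variables (A : finType) (c : cube_fam R n A).

Lemma phi_id a : phi c a a = 0%N.
Proof. by rewrite /phi eqxx. Qed.

Lemma ex_first_separated a b (k : 'I_n) : separated c a b k ->
  exists i : 'I_n,
    separated c a b i /\ forall j : 'I_n, (j < i)%N -> ~~ separated c a b j.
Proof.
move=> sk; case: (arg_minnP (fun i : 'I_n => nat_of_ord i) sk) => i si min_i.
by exists i; split=> // j ji; apply/negP => /min_i; rewrite leqNgt ji.
Qed.

Lemma phi_first_separated a b (i : 'I_n) : a != b -> separated c a b i ->
  (forall j : 'I_n, (j < i)%N -> ~~ separated c a b j) ->
  phi c a b = if below c a b i then i.+1 else 0%N.
Proof.
move=> ab si min_i; rewrite /phi (negbTE ab).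
case: pickP => [i' /andP[si' /forallP min_i'] | /(_ i)]; last first.
  by rewrite si /=; move/negbT/negP; case; apply/forallP => j; apply/implyP => /min_i.
suff -> : i' = i by [].
apply/val_inj/eqP; rewrite eqn_leq; apply/andP; split; rewrite leqNgt; apply/negP.
- by move=> /(implyP (min_i' i)); rewrite si.
- by move=> /min_i; rewrite si'.
Qed.

Lemma phi_gt0P a b : (0 < phi c a b)%N -> exists i : 'I_n,
  [/\ phi c a b = i.+1, below c a b i &
      forall j : 'I_n, (j < i)%N -> ~~ separated c a b j].
Proof.
rewrite /phi; case: eqP => // _; case: pickP => // i /andP[_ /forallP min_i].
by case: ifP => // bi _; exists i; split=> // j; apply/implyP/min_i.
Qed.

Hypothesis c_cubes : is_cubes c.

Lemma cubes_cu_gt0 a i : 0 < cu c a i.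
Proof. by case: c_cubes. Qed.

Lemma cubes_unit_interval a i : 0 <= cv c a i /\ cw c a i <= 1.
Proof.
apply: affine_unit_interval (cubes_cu_gt0 a i) _ => t /andP[t_gt0 t_lt1].
have [_ maps_in _] := c_cubes.
by have [] := maps_in a (fun=> t) (fun=> conj t_gt0 t_lt1) i; rewrite /cemb => -> ->.
Qed.

Lemma cubes_separated a b : a != b -> exists i, separated c a b i.
Proof.
have [u_gt0 _ disj] := c_cubes; move=> ab.
case: (boolP [exists i, separated c a b i]) => [/existsP // | /existsPn no_sep].
have [x x_in xE] := cemb_onto_box (p := overlap_mid c a b) (u_gt0 a)
  (fun i => proj1 (overlap_midP (u_gt0 a i) (u_gt0 b i) (no_sep i))).
have [y y_in yE] := cemb_onto_box (p := overlap_mid c a b) (u_gt0 b)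
  (fun i => proj2 (overlap_midP (u_gt0 a i) (u_gt0 b i) (no_sep i))).
by case: (disj a b (elimN eqP ab) x y x_in y_in); rewrite xE yE.
Qed.

Lemma phi_wcdg : is_wcdg n (phi c).
Proof.
split=> [|a b ab]; first exact: phi_id.
have [k sk] := cubes_separated ab; have [j [sj min_j]] := ex_first_separated sk.
have ba : b != a by rewrite eq_sym.
have sj' : separated c b a j by rewrite separatedC.
have min_j' (j' : 'I_n) : (j' < j)%N -> ~~ separated c b a j'.
  by move=> /min_j; rewrite separatedC.
rewrite (phi_first_separated ab sj min_j) (phi_first_separated ba sj' min_j').
case: ifP => [ab_j | /negbT ab_j].
- by rewrite (negbTE (below_asym (cubes_cu_gt0 a j) (cubes_cu_gt0 b j) ab_j)) /= ltn_ord.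
- by move: sj; rewrite /separated (negbTE ab_j) /= => -> /=; rewrite ltn_ord.
Qed.

Lemma phi_edge_cv_lt a b (i : 'I_n) : phi c a b = i.+1 -> cv c a i < cv c b i.
Proof.
move=> abE; have /phi_gt0P [j [abE' ab_j _]] : (0 < phi c a b)%N by rewrite abE.
have -> : i = j by apply/val_inj/succn_inj; rewrite -abE -abE'.
exact: below_lt_cv (cubes_cu_gt0 a j) ab_j.
Qed.

Lemma phi_no_uniform_cycle w s : ~~ uniform_cycle (phi c) w s.
Proof.
apply/negP => /and4P[w_gt0 + _ cyc]; case: s cyc => // x s cyc _.
have [i wE] : exists i : 'I_n, w = i.+1.
  move: (cyc); rewrite /= rcons_path => /andP[_ /eqP lastE].
  have /phi_gt0P [i [+ _ _]] : (0 < phi c (last x s) x)%N by rewrite lastE.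
  by rewrite lastE; exists i.
have : cycle (fun y z => cv c y i < cv c z i) (x :: s).
  by apply: sub_cycle cyc => y z /eqP; rewrite wE; apply: phi_edge_cv_lt.
by apply/negP/cycle_irr_trans => [y|y z t]; [exact: ltxx | exact: lt_trans].
Qed.

Lemma phi_Gext : is_Gext n (phi c).
Proof.
by split; [exact: phi_wcdg | case=> w [s]; apply/negP/phi_no_uniform_cycle].
Qed.

End Graph.

(* An edge p -> q of phi c of weight i+1 is dominated by the edge between p'
   and q' in phi c': their first separating coordinate j satisfies i <= j, and
   j = i would make c_p and c_q separated both ways at i. *)
Lemma phi_edge_le (A1 A2 : finType) (c : cube_fam R n A1) (c' : cube_fam R n A2)
    p q p' q' :
  (forall i, 0 < cu c p i) -> (forall i, 0 < cu c q i) ->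
  p' != q' -> (exists k, separated c' p' q' k) ->
  (forall k, below c' p' q' k -> below c p q k) ->
  (forall k, below c' q' p' k -> below c q p k) ->
  (0 < phi c p q)%N ->
  ((0 < phi c' p' q') && (phi c p q <= phi c' p' q'))%N ||
  ((0 < phi c' q' p') && (phi c p q < phi c' q' p'))%N.
Proof.
move=> up uq pq [k sk] below_pq below_qp /phi_gt0P [i [-> pq_i min_i]].
have [j [sj min_j]] := ex_first_separated sk.
have sj_src : separated c p q j.
  case/orP: sj => [/below_pq | /below_qp]; first exact: below_separated.
  by rewrite separatedC; apply: below_separated.
have ij : (i <= j)%N by rewrite leqNgt; apply/negP => /min_i; rewrite sj_src.
have qp : q' != p' by rewrite eq_sym.
have sj' : separated c' q' p' j by rewrite separatedC.
have min_j' (l : 'I_n) : (l < j)%N -> ~~ separated c' q' p' l.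
  by move=> /min_j; rewrite separatedC.
rewrite (phi_first_separated pq sj min_j) (phi_first_separated qp sj' min_j').
case: ifP => [_ | /negbT pq'_j]; first by rewrite /= ltnS ij.
have qp'_j : below c' q' p' j by move: sj; rewrite /separated (negbTE pq'_j).
rewrite qp'_j /= ltnS ltn_neqAle ij andbT; apply: contraTneq pq_i => /val_inj ->.
exact: below_asym (uq j) (up j) (below_qp j qp'_j).
Qed.

Section Composition.
Variables (A B : finType) (c : cube_fam R n A) (a : A) (d : cube_fam R n B).
Hypotheses (c_cubes : is_cubes c) (d_cubes : is_cubes d).
Local Notation cd := (cube_comp c a d).

Lemma cube_comp_cu_gt0 z i : 0 < cu cd z i.
Proof.
by case: z => [x|b] /=; rewrite ?mulr_gt0 ?cubes_cu_gt0.
Qed.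

Lemma cube_comp_cv_ge b i : cv c a i <= cv cd (inr b) i.
Proof.
rewrite /= lerDr mulr_ge0 ?(ltW (cubes_cu_gt0 c_cubes a i)) //.
exact: proj1 (cubes_unit_interval d_cubes b i).
Qed.

Lemma cube_comp_cw_le b i : cw cd (inr b) i <= cw c a i.
Proof.
rewrite /cw /= addrA -mulrDr lerD2r ler_piMr ?(ltW (cubes_cu_gt0 c_cubes a i)) //.
exact: proj2 (cubes_unit_interval d_cubes b i).
Qed.

Lemma below_comp_inl_inr x b k : below c (val x) a k -> below cd (inl x) (inr b) k.
Proof. by move=> /le_trans; apply; apply: cube_comp_cv_ge. Qed.

Lemma below_comp_inr_inl b y k : below c a (val y) k -> below cd (inr b) (inl y) k.
Proof. exact/le_trans/cube_comp_cw_le. Qed.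

Lemma below_comp_inr b b' k : below d b b' k -> below cd (inr b) (inr b') k.
Proof.
rewrite /below /cw /= addrA -mulrDr lerD2r.
exact/ler_wpM2l/ltW/(cubes_cu_gt0 c_cubes).
Qed.

Lemma phi_comp_le : graph_le (phi cd) (graph_comp (phi c) a (phi d)).
Proof.
move=> z1 z2 pos; have z12 : z1 != z2 by apply: contraTneq pos => ->; rewrite phi_id.
move: (cube_comp_cu_gt0 z1) (cube_comp_cu_gt0 z2) => u1 u2.
case: z1 z2 z12 pos u1 u2 => [x|b] [y|b'] z12 pos u1 u2 /=.
- have xy : val x != val y by apply: contra z12 => /eqP/val_inj ->.
  exact: phi_edge_le u1 u2 xy (cubes_separated c_cubes xy) (fun k => id) (fun k => id) pos.
- have xa : val x != a := valP x.
  exact: phi_edge_le u1 u2 xa (cubes_separated c_cubes xa)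
    (@below_comp_inl_inr x b') (@below_comp_inr_inl b' x) pos.
- have ay : a != val y by rewrite eq_sym (valP y).
  exact: phi_edge_le u1 u2 ay (cubes_separated c_cubes ay)
    (@below_comp_inr_inl b y) (@below_comp_inl_inr y b) pos.
- have bb' : b != b' by apply: contra z12 => /eqP ->.
  exact: phi_edge_le u1 u2 bb' (cubes_separated d_cubes bb')
    (@below_comp_inr b b') (@below_comp_inr b' b) pos.
Qed.

End Composition.

Lemma phi_relabel (A A' : finType) (c : cube_fam R n A) (sigma : A' -> A) :
  injective sigma -> phi (cube_relabel c sigma) = graph_relabel (phi c) sigma.
Proof.
move=> sigma_inj; apply: functional_extensionality => x.
by apply: functional_extensionality => y; rewrite /phi /graph_relabel (inj_eq sigma_inj).
Qed.

End Phi.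

Theorem mainTheorem5 (R : realType) (n : nat) (hn : (1 <= n)%N) :
  (forall (A : finType) (c : cube_fam R n A), is_cubes c -> is_Gext n (phi c))
  /\
  (forall (A B : finType) (a : A) (c : cube_fam R n A) (d : cube_fam R n B),
      is_cubes c -> is_cubes d ->
      graph_le (phi (cube_comp c a d)) (graph_comp (phi c) a (phi d)))
  /\
  (forall (A A' : finType) (sigma : A' -> A) (c : cube_fam R n A),
      bijective sigma -> is_cubes c ->
      phi (cube_relabel c sigma) = graph_relabel (phi c) sigma).
Proof.
split; first exact: phi_Gext.
split=> [A B a c d | A A' sigma c /bij_inj sigma_inj _]; first exact: phi_comp_le.
exact: phi_relabel.
Qed.
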